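(* Let $\mathcal{C}$ be an $[n,k]_q$ code and fix $i\in\{1,\dots,q-1\}$. There exists a non-zero vector $r=(r_1,\dots,r_{q-1})\in\mathbb{N}^{q-1}$ such that $$\sum_{j=1}^{q-1} r_j\left(a[\alpha^{i-j}]-b[\alpha^{i-j}]\right)\neq 0\quad\text{for all } a,b\in\mathcal{C} \text{ with } a\ne b$$ if and only if $V(a)\neq V(b)$ for all $a,b\in\mathcal{C}$ with $a\neq b$.
   Context: $q$ is a prime power, $\alpha$ a fixed primitive element of $\mathbb{F}_q$ (exponents of $\alpha$ are taken modulo $q-1$), $\mathbb{N}=\{0,1,2,\dots\}$. An $[n,k]_q$ code is a $k$-dimensional subspace of $\mathbb{F}_q^n$. For $c\in\mathbb{F}_q^n$ and $\beta\in\mathbb{F}_q$, $c[\beta]=|\{l: c_l=\beta\}|$, and $V(c)=(c[\alpha],c[\alpha^2],\dots,c[\alpha^{q-1}],c[0])$. *)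

From HB Require Import structures.
From mathcomp Require Import all_boot all_order all_algebra all_field.
Set Implicit Arguments. Unset Strict Implicit. Unset Printing Implicit Defensive.
Import GRing.Theory.
Local Open Scope ring_scope.

Definition wcount (F : finFieldType) (n : nat) (c : 'rV[F]_n) (beta : F) : nat :=
  #|[set l : 'I_n | c 0 l == beta]|.

(* V(c) = (c[alpha], c[alpha^2], ..., c[alpha^(q-1)], c[0]), q = #|F| *)
Definition Vvec (F : finFieldType) (alpha : F) (n : nat) (c : 'rV[F]_n) : seq nat :=
  rcons [seq wcount c (alpha ^+ j) | j <- iota 1 (#|F|.-1)] (wcount c 0).

(* alpha^(e) for an integer exponent e = i - j with 1 <= i, j <= q-1,
   exponent taken modulo q-1 *)
Definition alpha_pow_diff (F : finFieldType) (alpha : F) (i j : nat) : F :=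
  alpha ^+ ((i + #|F|.-1 - j) %% #|F|.-1).

From HB Require Import structures.
From mathcomp Require Import all_boot all_order all_algebra all_field.
From mathcomp Require Import zify.
Import GRing.Theory Num.Theory.
Set Implicit Arguments. Unset Strict Implicit.
Local Open Scope ring_scope.

(* As j runs over 1, ..., q-1, alpha^(i-j) runs over all nonzero elements of
   F, and the count of 0 is determined by the others, so all the differences
   a[alpha^(i-j)] - b[alpha^(i-j)] vanish exactly when V(a) = V(b).  Hence
   V(a) = V(b) kills every weighted sum; conversely, since all counts lie in
   [0, n], the weights r_j = (n+1)^j make the weighted sum a base-(n+1)
   expansion with digits of absolute value at most n, which vanishes only if
   every digit does. *)

Lemma radix_digits_eq0 (M m : nat) (d : 'I_m -> int) :
  (forall j, `|d j| < M%:Z) -> \sum_(j < m) (M ^ j)%:Z * d j = 0 ->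
  forall j, d j = 0.
Proof.
elim: m d => [|m IH] d d_lt sum0 j; first by case: j.
move: sum0; rewrite big_ord_recl expn0 mul1r.
under eq_bigr => l _ do rewrite /bump /= expnS PoszM -mulrA.
rewrite -mulr_sumr; set S := \sum_(l < m) _ => sum0.
have := d_lt ord0; rewrite ltr_norml => /andP [d0_gt d0_lt].
have S0 : S = 0 by nia.
have d0 : d ord0 = 0 by lia.
have [j' ->|->] := unliftP ord0 j; last exact: d0.
by apply: (IH (fun l => d (lift ord0 l))) => // l; apply: d_lt.
Qed.

Section WeightCounts.

Variables (F : finFieldType) (n : nat).
Implicit Types (a b c : 'rV[F]_n) (x : F).

Lemma sum_wcount c : (\sum_x wcount c x)%N = n.
Proof.
rewrite -[RHS]card_ord -sum1_card (partition_big (fun l => c 0 l) predT) //=.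
apply: eq_bigr => x _; rewrite /wcount -sum1_card.
by apply: eq_bigl => l; rewrite inE.
Qed.

Lemma wcount_diff_lt a b x : `|(wcount a x)%:Z - (wcount b x)%:Z| < n.+1%:Z.
Proof.
have wcount_le c : (wcount c x <= n)%N by rewrite -[leqRHS]card_ord max_card.
by rewrite ltr_norml; have := wcount_le a; have := wcount_le b; lia.
Qed.

Lemma eq_wcount a b :
  (forall x, x != 0 -> wcount a x = wcount b x) -> wcount a =1 wcount b.
Proof.
move=> eq_nz x; have [->|/eq_nz //] := eqVneq x 0.
have : (\sum_y wcount a y = \sum_y wcount b y)%N.
  by rewrite (sum_wcount a) (sum_wcount b).
rewrite (bigD1 0) // (bigD1 0 (P := predT)) //=.
rewrite (eq_bigr (wcount b)) => [/addIn //|y /= /eq_nz //].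
Qed.

End WeightCounts.

Section PrimitiveRoot.

Variables (F : finFieldType) (alpha : F).
Local Notation N := #|F|.-1.
Hypothesis alpha_prim : N.-primitive_root alpha.

Lemma nonzero_expS_prim_root x : x != 0 -> exists j : 'I_N, x = alpha ^+ j.+1.
Proof.
move=> x_nz; have N_gt0 := prim_order_gt0 alpha_prim.
have xN : x ^+ N = 1.
  apply: (mulIf x_nz); rewrite mul1r -exprSr prednK ?expf_card //.
  by apply/card_gt0P; exists 0.
have [e ->] := prim_rootP alpha_prim xN.
exists (Ordinal (ltn_pmod (e + N.-1) N_gt0)).
apply/esym; rewrite -(prim_expr_mod alpha_prim) /= -addn1 modnDml -addnA.
by rewrite addn1 prednK // modnDr (prim_expr_mod alpha_prim).
Qed.

Lemma alpha_neq0 : alpha != 0.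
Proof.
apply/eqP => alpha0; have := prim_expr_order alpha_prim.
rewrite alpha0 expr0n (gtn_eqF (prim_order_gt0 alpha_prim)) => /esym/eqP.
by rewrite oner_eq0.
Qed.

Lemma alpha_pow_diff_neq0 i j : alpha_pow_diff alpha i j != 0.
Proof. exact/expf_neq0/alpha_neq0. Qed.

(* The exponent is reduced modulo q-1 only after adding q-1, so the truncated
   subtraction is harmless as long as j <= i + (q-1). *)
Lemma alpha_pow_diffE i j :
  (j <= i + N)%N -> alpha_pow_diff alpha i j = alpha ^+ i / alpha ^+ j.
Proof.
move=> j_le; rewrite /alpha_pow_diff (prim_expr_mod alpha_prim).
apply: (canRL (mulfK (expf_neq0 _ alpha_neq0))).
by rewrite -exprD subnK // exprD (prim_expr_order alpha_prim) mulr1.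
Qed.

Lemma alpha_pow_diff_onto i x :
  x != 0 -> exists j : 'I_N, alpha_pow_diff alpha i j.+1 = x.
Proof.
move=> x_nz; have ai_nz := expf_neq0 i alpha_neq0.
have /nonzero_expS_prim_root [j ej] := mulf_neq0 ai_nz (invr_neq0 x_nz).
exists j; rewrite alpha_pow_diffE ?ltn_addl //.
by rewrite -ej invfM invrK mulrA divff ?mul1r.
Qed.

Lemma nth_Vvec n (c : 'rV[F]_n) (j : 'I_N) :
  nth 0%N (Vvec alpha c) j = wcount c (alpha ^+ j.+1).
Proof.
rewrite /Vvec nth_rcons size_map size_iota ltn_ord.
by rewrite (nth_map 0%N) ?size_iota // nth_iota.
Qed.

Lemma Vvec_eqP n (a b : 'rV[F]_n) :
  Vvec alpha a = Vvec alpha b <-> (forall x, x != 0 -> wcount a x = wcount b x).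
Proof.
split=> [Eab x /nonzero_expS_prim_root [j ->] | /eq_wcount Eab].
  by rewrite -!nth_Vvec Eab.
by rewrite /Vvec Eab (eq_map (fun j => Eab (alpha ^+ j))).
Qed.

End PrimitiveRoot.

Theorem mainTheorem5 (F : finFieldType) (alpha : F)
  (halpha : (#|F|.-1).-primitive_root alpha)
  (n k : nat) (C : {vspace 'rV[F]_n}) (hC : \dim C = k)
  (i : nat) (hi : (1 <= i <= #|F|.-1)%N) :
  (exists r : 'I_(#|F|.-1) -> nat,
      (exists j, r j != 0%N) /\
      (forall a b : 'rV[F]_n, a \in C -> b \in C -> a != b ->
         \sum_(j < #|F|.-1)
            (r j)%:Z * ((wcount a (alpha_pow_diff alpha i j.+1))%:Z
                        - (wcount b (alpha_pow_diff alpha i j.+1))%:Z) != 0))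
  <->
  (forall a b : 'rV[F]_n, a \in C -> b \in C -> a != b ->
     Vvec alpha a != Vvec alpha b).
Proof.
split=> [[r [_ sum_neq0]] | Vvec_inj].
  move=> a b aC bC ab; apply: contra (sum_neq0 a b aC bC ab) => /eqP.
  move=> /(Vvec_eqP halpha) Eab; apply/eqP/big1 => j _.
  by rewrite Eab ?alpha_pow_diff_neq0 // subrr mulr0.
exists (fun j => n.+1 ^ j)%N; split.
  by exists (Ordinal (prim_order_gt0 halpha)); rewrite expn_eq0.
move=> a b aC bC ab; apply: contra (Vvec_inj a b aC bC ab) => /eqP sum0.
have digits0 := radix_digits_eq0 (fun j => wcount_diff_lt a b _) sum0.
apply/eqP/(Vvec_eqP halpha) => x /(alpha_pow_diff_onto halpha i) [j <-].
by apply/eqP; rewrite -eqz_nat -subr_eq0 digits0.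
Qed.
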